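(* For every $n\geq 4$, \[\widehat{\mathsf{g}}(K_n^3)\geq \left\lceil\frac{(n-2)(n+3)(n-4)}{12}\right\rceil.\]
   Context: $K_n^3$ is the complete $3$-uniform hypergraph on vertex set $[n]$ (edges: all $3$-element subsets). Its Levi graph $L_n$ is the bipartite graph with vertex set $[n]\sqcup\binom{[n]}{3}$, $i$ adjacent to triple $t$ iff $i\in t$. The Euler genus of a graph $G$ is $\widehat{\mathsf{g}}(G)=\min\{2\mathsf{g}(G),\widetilde{\mathsf{g}}(G)\}$ where $\mathsf{g}$ is the orientable genus and $\widetilde{\mathsf{g}}$ the non-orientable genus (0 for planar graphs); $\widehat{\mathsf{g}}(K_n^3):=\widehat{\mathsf{g}}(L_n)$. *)

From HB Require Import structures.
From mathcomp Require Import all_boot all_order all_algebra all_fingroup.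
Set Implicit Arguments. Unset Strict Implicit. Unset Printing Implicit Defensive.
Import Order.TTheory GRing.Theory Num.Theory.

(* The Levi graph L_n of the complete 3-uniform hypergraph K_n^3.           *)
(* Edges: incident pairs (i, t) with i \in t.  L_n is simple and bipartite, *)
(* so edges are identified with such incident pairs.                        *)

Notation triple n := {t : {set 'I_n} | #|t| == 3}.

Notation LVert n := ('I_n + triple n)%type.

Notation LEdge n := {p : 'I_n * triple n | p.1 \in val p.2}.

Definition ept n (e : LEdge n) : 'I_n := (val e).1.
Definition etr n (e : LEdge n) : triple n := (val e).2.

(* Combinatorial embedding schemes (rotation system + edge signature), see  *)
(* Mohar--Thomassen, "Graphs on Surfaces", Sec. 3.3 / 4.1.                  *)
(* The rotation at a point-vertex i is encoded by the restriction of a      *)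
(* permutation rp of the edges to the edges at i, which must be a single    *)
(* cycle; likewise rt for triple-vertices.  sg e = true means e is twisted. *)

Record scheme (n : nat) := Scheme {
  rot_pt : {perm LEdge n};
  rot_tr : {perm LEdge n};
  sgn    : {ffun LEdge n -> bool} }.

Definition valid_scheme n (S : scheme n) : Prop :=
  (forall e, ept (rot_pt S e) = ept e) /\
  (forall e f, ept e = ept f -> fconnect (rot_pt S) e f) /\
  (forall e, etr (rot_tr S e) = etr e) /\
  (forall e f, etr e = etr f -> fconnect (rot_tr S) e f).

(* Flags: (edge, end, side); end = false is the point end, true the triple  *)
(* end; side says whether the flag lies in the angle between e and its      *)
(* successor (true) or its predecessor (false) in the rotation at that end. *)
Notation flag n := (LEdge n * bool * bool)%type.

Definition rot_at n (S : scheme n) (b : bool) : {perm LEdge n} :=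
  if b then rot_tr S else rot_pt S.

(* move to the other end of the edge (keeping the same physical side,      *)
(* which swaps the local side label unless the edge is twisted)            *)
Definition tau0 n (S : scheme n) (x : flag n) : flag n :=
  let: (e, b, s) := x in (e, ~~ b, if sgn S e then s else ~~ s).

(* move across the angle at the current vertex to the neighbouring edge *)
Definition tau1 n (S : scheme n) (x : flag n) : flag n :=
  let: (e, b, s) := x in
  if s then (rot_at S b e, b, false) else ((rot_at S b)^-1%g e, b, true).

Definition face_rel n (S : scheme n) : rel (flag n) :=
  fun x y => (y == tau0 S x) || (y == tau1 S x).

(* number of faces = number of orbits of <tau0, tau1> on flags *)
Definition num_faces n (S : scheme n) : nat := n_comp (face_rel S) predT.

(* Euler genus of the surface determined by the scheme (L_n is connected): *)
Definition scheme_euler_genus n (S : scheme n) : int :=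
  (2%:Z - (#|{: LVert n}|)%:Z + (#|{: LEdge n}|)%:Z - (num_faces S)%:Z)%R.

(* Euler genus of L_n (= of K_n^3) is at least k iff every embedding scheme *)
(* yields Euler genus at least k (the Euler genus is the minimum over all   *)
(* embedding schemes).                                                      *)
Definition euler_genus_Kn3_ge (n : nat) (k : int) : Prop :=
  forall S : scheme n, valid_scheme S -> (k <= scheme_euler_genus S)%R.

From HB Require Import structures.
From mathcomp Require Import all_boot all_order all_algebra all_fingroup.
From mathcomp Require Import zify.
Set Implicit Arguments. Unset Strict Implicit. Unset Printing Implicit Defensive.

(* Since L_n is simple, bipartite and (for n >= 4) of minimum degree at least
   2, every facial walk of an embedding has length at least 4, i.e. every face
   carries at least 8 flags.  Counting the 4E flags gives 2F <= E, and with
   V = n + C(n,3), E = 3 C(n,3) Euler's formula yields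
   2 - V + E - F >= 2 - n + C(n,3)/2 = (n-2)(n+3)(n-4)/12. *)

Lemma n_comp_mul_leq_card (T : finType) (e : rel T) (k : nat) :
  connect_sym e -> (forall x, k <= #|connect e x|) -> k * n_comp e T <= #|T|.
Proof.
move=> sym_e min_k.
rewrite -[#|T|]sum1_card (partition_big (fingraph.root e) (roots e)) => [|x _];
  last exact: roots_root.
rewrite /n_comp_mem -sum1_card big_distrr /=.
rewrite [X in X <= _](eq_bigl (roots e)) => [|r]; last by rewrite !inE andbT.
apply: leq_sum => r /eqP rr.
rewrite muln1 sum1_card (leq_trans (min_k r)) // subset_leq_card //.
apply/subsetP => x; rewrite !inE unfold_in /= -{2}rr.
by move=> /(fingraph.rootP sym_e) rx; apply/eqP.
Qed.

Lemma card_triple n : #|{: triple n}| = 'C(n, 3).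
Proof.
rewrite card_sig -[in RHS](card_ord n) -card_draws.
by apply: eq_card => t; rewrite !inE.
Qed.

Lemma card_LVert n : #|{: LVert n}| = n + 'C(n, 3).
Proof. by rewrite card_sum card_ord card_triple. Qed.

Lemma card_LEdge n : #|{: LEdge n}| = 3 * 'C(n, 3).
Proof.
rewrite card_sig -sum1_card big_mkcond /=.
rewrite -(pair_bigA _ (fun i (t : triple n) => (i \in val t) : nat)) exchange_big /=.
rewrite (eq_bigr (fun _ => 3)) => [|t _]; last first.
  by rewrite -big_mkcond /= sum1_card; apply/eqP/(valP t).
by rewrite sum_nat_const card_triple mulnC.
Qed.

Lemma bin3_ffact n : 'C(n, 3) * 6 = n * (n - 1) * (n - 2).
Proof.
rewrite (bin_ffact n 3) !ffactnS ffactn0 muln1.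
by case: n => [|[|[|n]]] //=; rewrite !subn1 /=; lia.
Qed.

Definition share_end n (b : bool) (e f : LEdge n) : bool :=
  if b then etr e == etr f else ept e == ept f.

Lemma share_end_sym n b (e f : LEdge n) : share_end b e f = share_end b f e.
Proof. by case: b; rewrite /share_end eq_sym. Qed.

Lemma share_end_trans n b (e f g : LEdge n) :
  share_end b e f -> share_end b f g -> share_end b e g.
Proof. by case: b; rewrite /share_end => /eqP-> /eqP->. Qed.

Lemma eq_edge_share_ends n b (e f : LEdge n) :
  share_end b e f -> share_end (~~ b) e f -> e = f.
Proof.
suff eq_ends : share_end false e f -> share_end true e f -> e = f.
  by case: b => [/[swap]|]; apply: eq_ends.
move=> /eqP pt_ef /eqP tr_ef; apply: val_inj.
by move: pt_ef tr_ef; rewrite /ept /etr; case: (val e) (val f) => ? ? [? ?] /= -> ->.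
Qed.

Lemma other_edge_at_end n b (e : LEdge n) :
  4 <= n -> exists2 f, share_end b e f & e != f.
Proof.
case: e => [[i t] /= it] n_ge4.
have t3 : #|val t| = 3 by apply/eqP/(valP t).
have /card_gt0P[a] : 0 < #|val t :\ i| by move: t3; rewrite (cardsD1 i) it add1n => -[->].
rewrite !inE => /andP[ai at'].
case: b.
  exists (exist _ (a, t) at'); rewrite /share_end /etr //=.
  by apply: contraNneq ai => /(congr1 (fun f : LEdge n => (val f).1)) /= ->.
have /card_gt0P[c] : 0 < #|~: val t| by move: (cardsC (val t)); rewrite card_ord t3; lia.
rewrite inE => ct.
have ic : i != c by apply: contraNneq ct => <-.
have ac : a != c by apply: contraNneq ct => <-.
have iac3 : #|[set i; a; c]| == 3.
  by rewrite -setUA cardsU1 cards2 !inE ac negb_or ic (eq_sym i) ai.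
have i_iac : i \in [set i; a; c] by rewrite !inE eqxx.
exists (exist _ (i, exist _ [set i; a; c] iac3) i_iac); rewrite /share_end /ept //=.
apply: contraNneq ct => /(congr1 (fun f : LEdge n => val (val f).2)) /= ->.
by rewrite !inE eqxx !orbT.
Qed.

Lemma uniq4 (T : eqType) (a b c d : T) : a != b -> a != c -> a != d ->
  b != c -> b != d -> c != d -> uniq [:: a; b; c; d].
Proof. by move=> ab ac ad bc bd cd; rewrite /= !inE !negb_or ab ac ad bc bd cd. Qed.

Section Faces.

Variables (n : nat) (S : scheme n).
Hypotheses (n_ge4 : 4 <= n) (S_valid : valid_scheme S).

Let R := face_rel S.

Lemma rot_at_share_end b e : share_end b e (rot_at S b e).
Proof. by case: S_valid => [pt_rot [_ [tr_rot _]]]; case: b; rewrite /share_end /= ?pt_rot ?tr_rot. Qed.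

Lemma rot_atV_share_end b e : share_end b e ((rot_at S b)^-1%g e).
Proof. by rewrite share_end_sym -{2}[e](permKV (rot_at S b)) rot_at_share_end. Qed.

Lemma rot_at_no_fixpoint b e : rot_at S b e != e.
Proof.
apply/eqP => fix_e; have [f fe f_e] := other_edge_at_end b e n_ge4.
have /iter_findex : fconnect (rot_at S b) e f.
  case: S_valid => [_ [pt_cyc [_ tr_cyc]]].
  by case: b {fix_e} fe => /eqP; [apply: tr_cyc | apply: pt_cyc].
by rewrite iter_fix // => ef; rewrite ef eqxx in f_e.
Qed.

Lemma rot_atV_no_fixpoint b e : (rot_at S b)^-1%g e != e.
Proof. by apply: contra_neq (rot_at_no_fixpoint b e) => fixV_e; rewrite -{1}fixV_e permKV. Qed.

Lemma tau1_turn e b s :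
  exists f s', [/\ tau1 S (e, b, s) = (f, b, s'), share_end b e f & e != f].
Proof.
case: s; first by exists (rot_at S b e), false; rewrite rot_at_share_end eq_sym rot_at_no_fixpoint.
by exists ((rot_at S b)^-1%g e), true; rewrite rot_atV_share_end eq_sym rot_atV_no_fixpoint.
Qed.

Lemma face_rel_sym : connect_sym R.
Proof.
have tau0K : involutive (tau0 S).
  by case=> [[e b] s] /=; rewrite negbK; case: (sgn S e); rewrite ?negbK.
have tau1K : involutive (tau1 S) by case=> [[e b] []] /=; rewrite ?permK ?permKV.
apply: sym_connect_sym => x y; rewrite /R /face_rel.
by apply/idP/idP => /orP[]/eqP->; rewrite ?tau0K ?tau1K eqxx ?orbT.
Qed.

Lemma face_other_end x e b s :
  connect R x (e, b, s) -> forall c, exists s', connect R x (e, c, s').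
Proof.
move=> xe c; have [-> | c_b] := eqVneq c b; first by exists s.
have -> : c = ~~ b by move: c_b; case: c; case: (b).
exists (if sgn S e then s else ~~ s); apply: connect_trans xe (connect1 _).
by rewrite /R /face_rel eqxx.
Qed.

Lemma face_turn x e b s : connect R x (e, b, s) ->
  exists2 f, share_end b e f && (e != f) & exists s', connect R x (f, b, s').
Proof.
move=> xe; have [f [s' [tau1_e ef e_f]]] := tau1_turn e b s.
exists f; first by rewrite ef e_f.
exists s'; apply: connect_trans xe (connect1 _).
by rewrite /R /face_rel tau1_e eqxx orbT.
Qed.

Lemma face_card_ge_edges x (es : seq (LEdge n)) : uniq es ->
  (forall f, f \in es -> exists b s, connect R x (f, b, s)) ->
  (size es).*2 <= #|connect R x|.
Proof.
move=> es_uniq es_face; set ends := [seq (f, c) | f <- es, c <- [:: false; true]].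
have ends_uniq : uniq ends by rewrite allpairs_uniq // => -[? ?] [? ?].
rewrite -muln2 -(size_allpairs pair es [:: false; true]) -(card_uniqP ends_uniq).
apply: leq_trans (leq_imset_card (fun y : flag n => y.1) _); apply: subset_leq_card.
apply/subsetP => _ /allpairsP[[f c] [/es_face[b [s fs]] _ ->]].
by have [s' fs'] := face_other_end fs c; apply/imsetP; exists (f, c, s').
Qed.

(* The face turns at both ends of e (into e1 and e2) and again at the far end
   of e1 (into e3); e, e1, e2, e3 are distinct because L_n is simple and
   bipartite. *)
Lemma face_card_ge8 (e : LEdge n) b s : 8 <= #|connect R (e, b, s)|.
Proof.
set x := (e, b, s).
have [e1 /andP[ee1 e_e1] [s1 xe1]] := face_turn (connect0 R x).
have [s1' xe1'] := face_other_end xe1 (~~ b).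
have [e3 /andP[e1e3 e1_e3] [s3 xe3]] := face_turn xe1'.
have [s' xe'] := face_other_end (connect0 R x) (~~ b).
have [e2 /andP[ee2 e_e2] [s2 xe2]] := face_turn xe'.
have e_e3 : e != e3.
  apply: contra_neq e_e1 => ee3; apply: (eq_edge_share_ends ee1).
  by rewrite ee3 share_end_sym.
have e1_e2 : e1 != e2.
  apply: contra_neq e_e1 => e12; apply: (eq_edge_share_ends ee1).
  by rewrite e12; exact: ee2.
have e2_e3 : e2 != e3.
  apply: contra_neq e_e1 => e23; apply: (eq_edge_share_ends ee1).
  by apply: (share_end_trans ee2); rewrite e23 share_end_sym; exact: e1e3.
apply: (face_card_ge_edges (uniq4 e_e1 e_e2 e_e3 e1_e2 e1_e3 e2_e3)) => f.
rewrite !inE => /or4P[] /eqP->.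
- by exists b, s; exact: connect0.
- by exists b, s1; exact: xe1.
- by exists (~~ b), s2; exact: xe2.
- by exists (~~ b), s3; exact: xe3.
Qed.

Lemma num_faces_double_le : (num_faces S).*2 <= #|{: LEdge n}|.
Proof.
have /(n_comp_mul_leq_card face_rel_sym) : forall x, 8 <= #|connect R x|.
  by case=> [[e b] s]; apply: face_card_ge8.
rewrite !card_prod card_bool -/(num_faces S).
set F := num_faces S; set E := #|{: LEdge n}|; lia.
Qed.

End Faces.

Theorem proposition2p2 (n : nat) (hn : 4 <= n) :
  euler_genus_Kn3_ge n ((((n - 2) * (n + 3) * (n - 4) + 11) %/ 12)%N)%:Z.
Proof.
have poly : (n - 2) * (n + 3) * (n - 4) + 12 * (n - 2) = n * (n - 1) * (n - 2).
  by nia.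
move=> S S_valid; rewrite /scheme_euler_genus card_LVert card_LEdge.
have := num_faces_double_le hn S_valid; rewrite card_LEdge.
have := bin3_ffact n.
set C := 'C(n, 3); set F := num_faces S; set P := (n - 2) * (n + 3) * (n - 4).
lia.
Qed.
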